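(* Consider the two-type Bellman–Harris process described in the context. Let $H(t),k_1(t),k_2(t)$ be nonnegative functions on $[0,\infty)$ with $\lim_{t\to\infty}k_i(t)=0$ ($i=1,2$) and $\lim_{t\to\infty}H(t)=\infty$. Suppose $$\lim_{t\to\infty}H(t)\mathbf{Q}(t;1-\lambda_1k_1(t),1-\lambda_2k_2(t))=\mathbf{h}(\lambda_1,\lambda_2),\quad\lambda_1\ge0,\ \lambda_2\ge0,$$ for a function $\mathbf{h}=(h_1,h_2)$ whose components are continuous in both arguments. Then $$\lim_{t\to\infty}H(t)\mathbf{Q}(t;e^{-\lambda_1k_3(t)},e^{-\lambda_2k_4(t)})=\mathbf{h}(\lambda_1,\lambda_2)$$ for any functions $k_3,k_4$ with $\lim_{t\to\infty}k_3(t)/k_1(t)=1$ and $\lim_{t\to\infty}k_4(t)/k_2(t)=1$.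
   Context: Two-type Bellman–Harris branching process $\mathbf{Z}(t)=(Z_1(t),Z_2(t))$ (particles of type $i\in\{1,2\}$ have life-length distribution $G_i$ and offspring generating function $f_i(s_1,s_2)$, and evolve independently). For $\mathbf{s}=(s_1,s_2)\in[0,1]^2$, $F_i(t;\mathbf{s})=\mathbf{E}[s_1^{Z_1(t)}s_2^{Z_2(t)}\mid\text{one initial particle of type }i]$ and $\mathbf{Q}(t;\mathbf{s})=(1-F_1(t;\mathbf{s}),1-F_2(t;\mathbf{s}))^\dagger$. *)

From HB Require Import structures.
From mathcomp Require Import all_boot all_order all_algebra.
From mathcomp Require Import all_classical all_reals all_analysis.
Set Implicit Arguments. Unset Strict Implicit. Unset Printing Implicit Defensive.
Import Order.TTheory GRing.Theory Num.Theory.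
Import numFieldNormedType.Exports.
Local Open Scope classical_set_scope.
Local Open Scope ring_scope.

Definition is_pmf2 (R : realType) (p : nat * nat -> R) : Prop :=
  (forall kl, 0 <= p kl) /\ (\esum_(kl in [set: nat * nat]) (p kl)%:E = 1)%E.

Definition pgf2 (R : realType) (p : nat * nat -> R) (s1 s2 : R) : R :=
  fine (\esum_(kl in [set: nat * nat]) (p kl * s1 ^+ kl.1 * s2 ^+ kl.2)%:E).

(* G1, G2 : life-length distributions (probability measures on [0,oo) with no atom at 0);
   q1, q2 : offspring distributions (f_i = pgf2 q_i);
   p1 t, p2 t : law of (Z1(t), Z2(t)) started from one particle of type 1, resp. 2,
   characterised by the Bellman-Harris integral equations
   F_i(t;s) = (1 - G_i(t)) s_i + int_0^t f_i(F_1(t-u;s), F_2(t-u;s)) dG_i(u). *)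
Definition BH2 (R : realType) (G1 G2 : probability R R)
  (q1 q2 : nat * nat -> R) (p1 p2 : R -> nat * nat -> R) : Prop :=
  [/\ G1 `]-oo, 0]%classic = 0%E /\ G2 `]-oo, 0]%classic = 0%E,
      is_pmf2 q1 /\ is_pmf2 q2,
      (forall t, 0 <= t -> is_pmf2 (p1 t) /\ is_pmf2 (p2 t)),
      (forall t s1 s2 : R, 0 <= t -> 0 <= s1 <= 1 -> 0 <= s2 <= 1 ->
        ((pgf2 (p1 t) s1 s2)%:E =
          ((1 - fine (G1 `[0%R, t]%classic)) * s1)%:E +
          \int[G1]_(u in `[0%R, t]%classic) (pgf2 q1 (pgf2 (p1 (t - u)) s1 s2)
                                            (pgf2 (p2 (t - u)) s1 s2))%:E)%E)
    & (forall t s1 s2 : R, 0 <= t -> 0 <= s1 <= 1 -> 0 <= s2 <= 1 ->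
        ((pgf2 (p2 t) s1 s2)%:E =
          ((1 - fine (G2 `[0%R, t]%classic)) * s2)%:E +
          \int[G2]_(u in `[0%R, t]%classic) (pgf2 q2 (pgf2 (p1 (t - u)) s1 s2)
                                            (pgf2 (p2 (t - u)) s1 s2))%:E)%E)].

Definition BH_F (R : realType) (p : R -> nat * nat -> R) (t s1 s2 : R) : R :=
  pgf2 (p t) s1 s2.

(* Put a(t) := (1 - exp(-l1 k3(t))) / k1(t), so that exp(-l1 k3(t)) = 1 - a(t) k1(t);
   since 1 - exp(-x) = x + O(x^2) and k3/k1 -> 1, a(t) -> l1.  Likewise for b(t) and l2.
   As F_i is nondecreasing in each argument on [0,1]^2 and H >= 0, the scaled defect
   H(t) (1 - F_i(t; 1 - m1 k1(t), 1 - m2 k2(t))) is nondecreasing in (m1, m2), so at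
   (a(t), b(t)) it is eventually squeezed between its values at the fixed points
   (max(0, l1 - d1), max(0, l2 - d2)) and (l1 + d1, l2 + d2); continuity of h in each
   variable separately makes the limits at these two corners close to h(l1, l2). *)

From HB Require Import structures.
From mathcomp Require Import all_boot all_order all_algebra.
From mathcomp Require Import all_classical all_reals all_analysis.
From mathcomp Require Import ring lra.
Import Order.TTheory GRing.Theory Num.Theory.
Import numFieldNormedType.Exports.
Local Open Scope classical_set_scope.
Local Open Scope ring_scope.

Section Pgf2.
Variables (R : realType) (p : nat * nat -> R).
Hypothesis p_pmf : is_pmf2 p.

Lemma pgf2_esum_fin_num (s1 s2 : R) : 0 <= s1 <= 1 -> 0 <= s2 <= 1 ->
  \esum_(kl in [set: nat * nat]) (p kl * s1 ^+ kl.1 * s2 ^+ kl.2)%:E \is a fin_num.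
Proof.
case: p_pmf => p0 p1 /andP[s10 s11] /andP[s20 s21].
rewrite ge0_fin_numE; last by apply: esum_ge0 => kl _; rewrite lee_fin !mulr_ge0 ?exprn_ge0.
rewrite (@le_lt_trans _ _ 1%E) ?ltry // -p1; apply: le_esum => kl _.
rewrite lee_fin -[leRHS]mulr1 -mulrA ler_wpM2l //.
by rewrite mulr_ile1 ?exprn_ge0 ?exprn_ile1.
Qed.

Lemma pgf2_le (s1 s1' s2 s2' : R) :
  0 <= s1 <= s1' -> s1' <= 1 -> 0 <= s2 <= s2' -> s2' <= 1 ->
  pgf2 p s1 s2 <= pgf2 p s1' s2'.
Proof.
move=> /andP[s10 s11'] s1'1 /andP[s20 s22'] s2'1.
have s1'0 := le_trans s10 s11'; have s2'0 := le_trans s20 s22'.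
have s11 := le_trans s11' s1'1; have s21 := le_trans s22' s2'1.
rewrite /pgf2; apply: fine_le; rewrite ?pgf2_esum_fin_num ?s10 ?s20 ?s1'0 ?s2'0 //.
apply: le_esum => kl _; case: p_pmf => p0 _.
rewrite lee_fin ler_pM ?mulr_ge0 ?exprn_ge0 ?lerXn2r //.
by rewrite ler_wpM2l // lerXn2r.
Qed.

End Pgf2.

Section FilterLimits.
Context {R : realType} {T : Type} {F : set_system T} {FF : Filter F}.

Lemma within_ge0_continuous_dist_lt {f : R -> R} {x e : R} :
  {within `[0, +oo[, continuous f} -> 0 <= x -> 0 < e ->
  exists2 d, 0 < d & forall y, 0 <= y -> `|x - y| < d -> `|f x - f y| < e.
Proof.
move=> /subspace_continuousP fc x0 e0.
have /fc : `[0, +oo[%classic x by rewrite /= in_itv /= andbT.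
move=> /cvgrPdist_lt /(_ e e0); rewrite near_withinE => /nbhs_ballP [d d0 fd].
exists d => // y y0 xy; apply: fd; first by rewrite -ball_normE.
by rewrite /= in_itv /= andbT.
Qed.

Lemma normr_sub_max0 {l d : R} : 0 <= l -> 0 <= d -> `|l - Num.max 0 (l - d)| <= d.
Proof.
move=> l0 d0; case: (leP 0 (l - d)) => ld.
  by rewrite opprB addrC subrK ger0_norm.
by rewrite subr0 ger0_norm //; lra.
Qed.

Lemma normr_sub_addr (l d : R) : 0 <= d -> `|l - (l + d)| = d.
Proof. by move=> d0; rewrite opprD addrA subrr add0r normrN ger0_norm. Qed.

Lemma separately_continuous_bracket {h : R -> R -> R} {l1 l2 e : R} :
  0 <= l1 -> 0 <= l2 -> 0 < e ->
  (forall m2, 0 <= m2 -> {within `[0, +oo[, continuous (fun m1 => h m1 m2)}) ->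
  (forall m1, 0 <= m1 -> {within `[0, +oo[, continuous (fun m2 => h m1 m2)}) ->
  exists d1, exists d2, [/\ 0 < d1, 0 < d2,
    `|h l1 l2 - h (l1 + d1) (l2 + d2)| < e &
    `|h l1 l2 - h (Num.max 0 (l1 - d1)) (Num.max 0 (l2 - d2))| < e].
Proof.
move=> l10 l20 e0 hc1 hc2.
have e2 : 0 < e / 2 by rewrite divr_gt0.
have [d d0 hd] := within_ge0_continuous_dist_lt (hc1 l2 l20) l10 e2.
have d2 : 0 < d / 2 by rewrite divr_gt0.
set U1 := l1 + d / 2; set L1 := Num.max 0 (l1 - d / 2).
have U10 : 0 <= U1 by rewrite /U1; lra.
have L10 : 0 <= L1 by rewrite le_max lexx.
have [dU dU0 hdU] := within_ge0_continuous_dist_lt (hc2 U1 U10) l20 e2.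
have [dL dL0 hdL] := within_ge0_continuous_dist_lt (hc2 L1 L10) l20 e2.
set d' := Num.min dU dL / 2.
have d'0 : 0 < d' by rewrite divr_gt0 // lt_min dU0 dL0.
have d'U : d' < dU.
  have : Num.min dU dL <= dU by rewrite ge_min lexx.
  rewrite /d'; lra.
have d'L : d' < dL.
  have : Num.min dU dL <= dL by rewrite ge_min lexx orbT.
  rewrite /d'; lra.
have dist2 : forall r, d' < r ->
    `|l2 - (l2 + d')| < r /\ `|l2 - Num.max 0 (l2 - d')| < r.
  move=> r d'r; rewrite normr_sub_addr ?ltW //; split => //.
  exact: le_lt_trans (normr_sub_max0 l20 (ltW d'0)) d'r.
exists (d / 2), d'; split => //.
- rewrite -[h l1 l2](subrK (h U1 l2)) -addrA.
  rewrite (le_lt_trans (ler_normD _ _)) // [e]splitr ltrD //.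
    by apply: hd => //; rewrite normr_sub_addr ?ltW //; lra.
  by apply: hdU; [lra | case: (dist2 _ d'U)].
- rewrite -[h l1 l2](subrK (h L1 l2)) -addrA.
  rewrite (le_lt_trans (ler_normD _ _)) // [e]splitr ltrD //.
    apply: hd => //; apply: le_lt_trans (normr_sub_max0 l10 (ltW d2)) _; lra.
  by apply: hdL; [rewrite le_max lexx | case: (dist2 _ d'L)].
Qed.

Lemma cvg_near_max0_bracket {a : T -> R} {l d : R} :
  0 < d -> a t @[t --> F] --> l -> (\forall t \near F, 0 <= a t) ->
  \forall t \near F, Num.max 0 (l - d) <= a t <= l + d.
Proof.
move=> d0 al a0.
have al_lt := cvgr_lt l al (l + d) ltac:(by rewrite ltrDl).
have al_gt := cvgr_gt l al (l - d) ltac:(by rewrite gtrBl).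
near=> t; rewrite ge_max -andbA; apply/and3P; split.
- by near: t.
- apply/ltW; near: t; exact: al_gt.
- apply/ltW; near: t; exact: al_lt.
Unshelve. all: by end_near.
Qed.

Lemma cvg_monotone_sandwich (G : T -> R -> R -> R) (h : R -> R -> R)
    (a b : T -> R) (l1 l2 : R) :
  0 <= l1 -> 0 <= l2 ->
  (forall U1 U2, \forall t \near F, forall m1 m1' m2 m2',
     0 <= m1 <= m1' -> m1' <= U1 -> 0 <= m2 <= m2' -> m2' <= U2 ->
     G t m1 m2 <= G t m1' m2') ->
  (forall m1 m2, 0 <= m1 -> 0 <= m2 -> G t m1 m2 @[t --> F] --> h m1 m2) ->
  (forall m2, 0 <= m2 -> {within `[0, +oo[, continuous (fun m1 => h m1 m2)}) ->
  (forall m1, 0 <= m1 -> {within `[0, +oo[, continuous (fun m2 => h m1 m2)}) ->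
  a t @[t --> F] --> l1 -> b t @[t --> F] --> l2 ->
  (\forall t \near F, 0 <= a t) -> (\forall t \near F, 0 <= b t) ->
  G t (a t) (b t) @[t --> F] --> h l1 l2.
Proof.
move=> l10 l20 Gmono Glim hc1 hc2 al bl a0 b0; apply/cvgrPdist_lt => e e0.
have e2 : 0 < e / 2 by rewrite divr_gt0.
have [d1 [d2 [d10 d20 hU hL]]] := separately_continuous_bracket l10 l20 e2 hc1 hc2.
set U1 := l1 + d1 in hU *; set U2 := l2 + d2 in hU *.
set L1 := Num.max 0 (l1 - d1) in hL *; set L2 := Num.max 0 (l2 - d2) in hL *.
have L10 : 0 <= L1 by rewrite le_max lexx.
have L20 : 0 <= L2 by rewrite le_max lexx.
have U10 : 0 <= U1 by rewrite /U1; lra.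
have U20 : 0 <= U2 by rewrite /U2; lra.
move/cvgrPdist_lt: (Glim U1 U2 U10 U20) => /(_ _ e2) GU.
move/cvgrPdist_lt: (Glim L1 L2 L10 L20) => /(_ _ e2) GL.
have aLU := cvg_near_max0_bracket d10 al a0.
have bLU := cvg_near_max0_bracket d20 bl b0.
near=> t.
have /andP[aL aU] : L1 <= a t <= U1 by near: t.
have /andP[bL bU] : L2 <= b t <= U2 by near: t.
have Gt : forall m1 m1' m2 m2', 0 <= m1 <= m1' -> m1' <= U1 ->
    0 <= m2 <= m2' -> m2' <= U2 -> G t m1 m2 <= G t m1' m2'.
  by near: t; exact: Gmono.
have lower : G t L1 L2 <= G t (a t) (b t) by apply: Gt; rewrite ?L10 ?L20.
have upper : G t (a t) (b t) <= G t U1 U2.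
  by apply: Gt; rewrite ?lexx ?aU ?bU ?andbT ?(le_trans L10 aL) ?(le_trans L20 bL).
have GUt : `|h U1 U2 - G t U1 U2| < e / 2 by near: t.
have GLt : `|h L1 L2 - G t L1 L2| < e / 2 by near: t.
move: hU hL GUt GLt; rewrite !ltr_norml => *; lra.
Unshelve. all: by end_near.
Qed.

Lemma one_sub_expRN_bounds {x : R} : 0 <= x -> x - x ^+ 2 <= 1 - expR (- x) <= x.
Proof.
move=> x0; have lowN := expR_ge1Dx (- x); have low := expR_ge1Dx x.
have expRNK : expR x * expR (- x) = 1 by rewrite -expRD subrr expR0.
have := expR_gt0 (- x); set y := expR (- x) in lowN expRNK * => y0.
have : y * (1 + x) <= y * expR x by rewrite ler_wpM2l // ltW.
have : x * (1 - x) <= x * y by rewrite ler_wpM2l.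
rewrite [y * expR x]mulrC expRNK => *; apply/andP; split; nra.
Qed.

Lemma near_ratio_cvg1_gt0 {k k' : T -> R} :
  (\forall t \near F, 0 <= k t) -> (k' t / k t) @[t --> F] --> (1 : R) ->
  \forall t \near F, 0 < k t /\ 0 < k' t.
Proof.
move=> k0 kk'; have kk'_gt := cvgr_gt 1 kk' (1 / 2) ltac:(lra).
near=> t; have kt0 : 0 <= k t by near: t.
have : 1 / 2 < k' t / k t by near: t.
move: kt0; rewrite le_eqVlt => /orP[/eqP <-|kt0]; first by rewrite invr0 mulr0; lra.
by rewrite ltr_pdivlMr // => ?; split => //; nra.
Unshelve. all: by end_near.
Qed.

Lemma cvg0_ratio_cvg1 {k k' : T -> R} :
  (\forall t \near F, 0 < k t) -> k t @[t --> F] --> (0 : R) ->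
  (k' t / k t) @[t --> F] --> (1 : R) -> k' t @[t --> F] --> (0 : R).
Proof.
move=> k0 k_0 kk'.
have k'E : {near F, (fun t => k' t / k t * k t) =1 k'}.
  by near=> t; rewrite divfK // gt_eqF //; near: t.
by apply: cvg_trans (near_eq_cvg k'E) _; rewrite -(mul1r 0); apply: cvgM.
Unshelve. all: by end_near.
Qed.

Lemma cvg_one_sub_expRN_div {k k' : T -> R} {l : R} : 0 <= l ->
  (\forall t \near F, 0 < k t /\ 0 < k' t) -> k' t @[t --> F] --> (0 : R) ->
  (k' t / k t) @[t --> F] --> (1 : R) ->
  (1 - expR (- (l * k' t))) / k t @[t --> F] --> l.
Proof.
move=> l0 kk'0 k'_0 kk'.
have lr : l * (k' t / k t) @[t --> F] --> l.
  by rewrite -[X in _ --> X]mulr1; apply: cvgMl_tmp.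
apply: (squeeze_cvgr (f := fun t => l * (k' t / k t) - l * (k' t / k t) * (l * k' t))
  (h := fun t => l * (k' t / k t))); last exact: lr.
- near=> t; have [kt0 k't0] : 0 < k t /\ 0 < k' t by near: t.
  have := one_sub_expRN_bounds (mulr_ge0 l0 (ltW k't0)).
  set x := l * k' t => /andP[lo up].
  have kV0 : 0 <= (k t)^-1 by rewrite invr_ge0 ltW.
  have -> : l * (k' t / k t) = x / k t by rewrite /x mulrA.
  have -> : x / k t - x / k t * x = (x - x ^+ 2) / k t by rewrite mulrBl; ring.
  by rewrite !ler_wpM2r.
- have := cvgB lr (cvgM lr (cvgMl_tmp (a := l) k'_0)); rewrite !mulr0 subr0; exact.
Unshelve. all: by end_near.
Qed.

Lemma near_one_sub_mul_expRN {k k' : T -> R} {l : R} : 0 <= l ->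
  (\forall t \near F, 0 <= k t) -> k t @[t --> F] --> (0 : R) ->
  (k' t / k t) @[t --> F] --> (1 : R) ->
  exists2 a : T -> R, a t @[t --> F] --> l &
    \forall t \near F, 0 <= a t /\ 1 - a t * k t = expR (- (l * k' t)).
Proof.
move=> l0 k0 k_0 kk'; have kk'0 := near_ratio_cvg1_gt0 k0 kk'.
have k'_0 : k' t @[t --> F] --> (0 : R).
  by apply: cvg0_ratio_cvg1 k_0 kk'; apply: filterS kk'0 => t [].
exists (fun t => (1 - expR (- (l * k' t))) / k t).
  exact: cvg_one_sub_expRN_div.
near=> t; have [kt0 k't0] : 0 < k t /\ 0 < k' t by near: t.
split; last by rewrite divfK ?gt_eqF //; ring.
apply: divr_ge0; last exact: ltW.
by rewrite subr_ge0 expR_le1 oppr_le0 (mulr_ge0 l0 (ltW k't0)).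
Unshelve. all: by end_near.
Qed.

Lemma scaled_defect_monotone (Fs : T -> R -> R -> R) (H k1 k2 : T -> R) :
  (\forall t \near F, forall s1 s1' s2 s2', 0 <= s1 <= s1' -> s1' <= 1 ->
     0 <= s2 <= s2' -> s2' <= 1 -> Fs t s1 s2 <= Fs t s1' s2') ->
  (\forall t \near F, 0 <= H t /\ 0 <= k1 t /\ 0 <= k2 t) ->
  k1 t @[t --> F] --> (0 : R) -> k2 t @[t --> F] --> (0 : R) ->
  forall U1 U2, \forall t \near F, forall m1 m1' m2 m2',
    0 <= m1 <= m1' -> m1' <= U1 -> 0 <= m2 <= m2' -> m2' <= U2 ->
    H t * (1 - Fs t (1 - m1 * k1 t) (1 - m2 * k2 t)) <=
    H t * (1 - Fs t (1 - m1' * k1 t) (1 - m2' * k2 t)).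
Proof.
move=> Fmono Hk0 k1_0 k2_0 U1 U2.
have Uk1 : \forall t \near F, U1 * k1 t < 1.
  by apply: (cvgr_lt 0) ltr01; rewrite -(mulr0 U1); exact: cvgMl_tmp.
have Uk2 : \forall t \near F, U2 * k2 t < 1.
  by apply: (cvgr_lt 0) ltr01; rewrite -(mulr0 U2); exact: cvgMl_tmp.
near=> t.
have [Ht0 [k1t0 k2t0]] : 0 <= H t /\ 0 <= k1 t /\ 0 <= k2 t by near: t.
have U1k1 : U1 * k1 t < 1 by near: t.
have U2k2 : U2 * k2 t < 1 by near: t.
have Ft : forall s1 s1' s2 s2', 0 <= s1 <= s1' -> s1' <= 1 ->
    0 <= s2 <= s2' -> s2' <= 1 -> Fs t s1 s2 <= Fs t s1' s2' by near: t.
move=> m1 m1' m2 m2' /andP[m10 m11'] m1'U /andP[m20 m22'] m2'U.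
rewrite ler_wpM2l // lerD2l lerN2.
by apply: Ft; (try apply/andP; try split); nra.
Unshelve. all: by end_near.
Qed.

Lemma cvg_scaled_defect_expR (Fs : T -> R -> R -> R) (H k1 k2 k3 k4 : T -> R)
    (h : R -> R -> R) (l1 l2 : R) :
  0 <= l1 -> 0 <= l2 ->
  (\forall t \near F, forall s1 s1' s2 s2', 0 <= s1 <= s1' -> s1' <= 1 ->
     0 <= s2 <= s2' -> s2' <= 1 -> Fs t s1 s2 <= Fs t s1' s2') ->
  (\forall t \near F, 0 <= H t /\ 0 <= k1 t /\ 0 <= k2 t) ->
  k1 t @[t --> F] --> (0 : R) -> k2 t @[t --> F] --> (0 : R) ->
  (forall m1 m2, 0 <= m1 -> 0 <= m2 ->
     H t * (1 - Fs t (1 - m1 * k1 t) (1 - m2 * k2 t)) @[t --> F] --> h m1 m2) ->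
  (forall m2, 0 <= m2 -> {within `[0, +oo[, continuous (fun m1 => h m1 m2)}) ->
  (forall m1, 0 <= m1 -> {within `[0, +oo[, continuous (fun m2 => h m1 m2)}) ->
  (k3 t / k1 t) @[t --> F] --> (1 : R) -> (k4 t / k2 t) @[t --> F] --> (1 : R) ->
  H t * (1 - Fs t (expR (- (l1 * k3 t))) (expR (- (l2 * k4 t)))) @[t --> F]
    --> h l1 l2.
Proof.
move=> l10 l20 Fmono Hk0 k1_0 k2_0 hlim hc1 hc2 k31 k42.
have k10 : \forall t \near F, 0 <= k1 t by apply: filterS Hk0 => t [_ []].
have k20 : \forall t \near F, 0 <= k2 t by apply: filterS Hk0 => t [_ []].
have [a al aE] := near_one_sub_mul_expRN l10 k10 k1_0 k31.
have [b bl bE] := near_one_sub_mul_expRN l20 k20 k2_0 k42.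
have abE : {near F, (fun t => H t * (1 - Fs t (1 - a t * k1 t) (1 - b t * k2 t))) =1
    (fun t => H t * (1 - Fs t (expR (- (l1 * k3 t))) (expR (- (l2 * k4 t)))))}.
  by apply: filterS2 aE bE => t [_ ->] [_ ->].
apply: cvg_trans (near_eq_cvg abE) _.
apply: cvg_monotone_sandwich hlim hc1 hc2 al bl _ _ => //.
- exact: scaled_defect_monotone.
- by apply: filterS aE => t [].
- by apply: filterS bE => t [].
Qed.

End FilterLimits.

Theorem lemma5 (R : realType) (G1 G2 : probability R R)
  (q1 q2 : nat * nat -> R) (p1 p2 : R -> nat * nat -> R)
  (H k1 k2 k3 k4 : R -> R) (h1 h2 : R -> R -> R) :
  BH2 G1 G2 q1 q2 p1 p2 ->
  (forall t, 0 <= t -> 0 <= H t /\ 0 <= k1 t /\ 0 <= k2 t) ->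
  k1 t @[t --> +oo] --> (0:R) ->
  k2 t @[t --> +oo] --> (0:R) ->
  H t @[t --> +oo] --> +oo ->
  (forall l1 l2, 0 <= l1 -> 0 <= l2 ->
     (H t * (1 - BH_F p1 t (1 - l1 * k1 t) (1 - l2 * k2 t))) @[t --> +oo]
       --> h1 l1 l2) ->
  (forall l1 l2, 0 <= l1 -> 0 <= l2 ->
     (H t * (1 - BH_F p2 t (1 - l1 * k1 t) (1 - l2 * k2 t))) @[t --> +oo]
       --> h2 l1 l2) ->
  (forall l2, 0 <= l2 -> {within `[0, +oo[, continuous (fun l1 => h1 l1 l2)}) ->
  (forall l1, 0 <= l1 -> {within `[0, +oo[, continuous (fun l2 => h1 l1 l2)}) ->
  (forall l2, 0 <= l2 -> {within `[0, +oo[, continuous (fun l1 => h2 l1 l2)}) ->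
  (forall l1, 0 <= l1 -> {within `[0, +oo[, continuous (fun l2 => h2 l1 l2)}) ->
  (k3 t / k1 t) @[t --> +oo] --> (1:R) ->
  (k4 t / k2 t) @[t --> +oo] --> (1:R) ->
  forall l1 l2, 0 <= l1 -> 0 <= l2 ->
    ((H t * (1 - BH_F p1 t (expR (- (l1 * k3 t))) (expR (- (l2 * k4 t)))))
       @[t --> +oo] --> h1 l1 l2) /\
    ((H t * (1 - BH_F p2 t (expR (- (l1 * k3 t))) (expR (- (l2 * k4 t)))))
       @[t --> +oo] --> h2 l1 l2).
Proof.
move=> [_ _ p_pmf _ _] Hk0 k1_0 k2_0 _ lim1 lim2 hc11 hc12 hc21 hc22 k31 k42.
move=> l1 l2 l10 l20.
have t_ge0 : \forall t \near +oo, (0 : R) <= t by exists 0; split=> // t /ltW.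
have Hk0_oo : \forall t \near +oo, 0 <= H t /\ 0 <= k1 t /\ 0 <= k2 t.
  by apply: filterS t_ge0 => t; exact: Hk0.
have BH_F_le (p : R -> nat * nat -> R) : (forall t, 0 <= t -> is_pmf2 (p t)) ->
    \forall t \near +oo, forall s1 s1' s2 s2', 0 <= s1 <= s1' -> s1' <= 1 ->
      0 <= s2 <= s2' -> s2' <= 1 -> BH_F p t s1 s2 <= BH_F p t s1' s2'.
  by move=> pt_pmf; apply: filterS t_ge0 => t /pt_pmf; exact: pgf2_le.
have p1_pmf t : 0 <= t -> is_pmf2 (p1 t) by case/p_pmf.
have p2_pmf t : 0 <= t -> is_pmf2 (p2 t) by case/p_pmf.
by split; apply: (cvg_scaled_defect_expR _ H k1 k2) => //; exact: BH_F_le.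
Qed.
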